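(* Let $\Sigma=\{s_0,s_1,\dots,s_{\sigma-1}\}$ be an ordered alphabet of size $\sigma\ge 1$ with $s_0<s_1<\cdots<s_{\sigma-1}$, and let $k_0,\dots,k_{\sigma-1}$ be integers with $k_i>1$ for all $i$. Let $$K=s_{\sigma-1}^{k_{\sigma-1}}\,s_{\sigma-2}^{k_{\sigma-2}}\cdots s_1^{k_1}\,s_0^{k_0}.$$ Then a smallest suffixient set for $K\$$ has size $\chi(K)=2\sigma$.
   Context: Strings are $0$-indexed; $w[i..j]$ denotes the substring from position $i$ to $j$ inclusive. $\$\notin\Sigma$ is an end-marker smaller than every letter of $\Sigma$, occurring only at the end of $K\$$; substrings of $K\$$ are words over $\Sigma\cup\{\$\}$. For a string $v$, a substring $x$ of $v$ (possibly empty) is right-maximal if there are two distinct letters $a\ne b$ such that both $xa$ and $xb$ are substrings of $v$; the words $xa$ that are substrings of $v$, for right-maximal $x$, are called right-extensions of $v$. A set $S$ of positions of $v$ is suffixient for $v$ if every right-extension $x$ of $v$ is a suffix of $v[0..j]$ for some $j\in S$. $\chi(K)$ denotes the minimum size of a suffixient set for $K\$$. *)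

From mathcomp Require Import all_boot.
Set Implicit Arguments. Unset Strict Implicit. Unset Printing Implicit Defensive.

Section Suff.
Variable T : eqType.

Definition right_maximal (v x : seq T) : Prop :=
  exists a b : T, a != b /\ infix (rcons x a) v /\ infix (rcons x b) v.

Definition right_extension (v y : seq T) : Prop :=
  exists (x : seq T) (a : T), y = rcons x a /\ right_maximal v x /\ infix y v.

Definition suffixient (v : seq T) (S : {set 'I_(size v)}) : Prop :=
  forall y, right_extension v y ->
    exists2 j : 'I_(size v), j \in S & suffix y (take j.+1 v).
End Suff.

(* Alphabet: letter s_i is encoded as the natural number i.+1 (so s_0 < s_1 < ...),
   and the end-marker $ is encoded as 0, smaller than every letter. *)
Definition sym (i : nat) : nat := i.+1.
Definition endmarker : nat := 0.

Definition Kword (sigma : nat) (k : nat -> nat) : seq nat :=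
  flatten [seq nseq (k i) (sym i) | i <- rev (iota 0 sigma)].

Definition Kdollar (sigma : nat) (k : nat -> nat) : seq nat :=
  rcons (Kword sigma k) endmarker.

(* Every letter of K$ occupies a single run, so a right-maximal factor x
   cannot contain two distinct adjacent letters: an occurrence of them would
   straddle the unique run end carrying the first letter, which pins down the
   occurrence of x and hence the letter following it.  Thus x is a power of a
   single letter, and every right-extension either is a power c^m, which also
   occurs ending at the last position of the run of c, or has the form s_i^m b
   with b the letter just after the run of s_i, which occurs only there.
   So the last position of each run and the position right after it form a
   suffixient set; conversely s_i^(k_i) and s_i^(k_i - 1) b occur only at these two
   positions, which are distinct because k_i > 1. *)

From mathcomp Require Import all_boot zify.
Set Implicit Arguments. Unset Strict Implicit. Unset Printing Implicit Defensive.

Section Occurrences.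
Variables (T : eqType) (x0 : T).
Implicit Types (s w y : seq T) (a c : T).

Lemma suffix_takeP y w e : e <= size w ->
  suffix y (take e w) <->
  size y <= e /\ forall t, t < size y -> nth x0 y t = nth x0 w (e - size y + t).
Proof.
move=> le_ew; rewrite suffixE size_takel //; split => [/eqP def_y | [le_ye eq_yw]].
  have le_ye : size y <= e by rewrite -def_y size_drop size_takel // leq_subr.
  by split=> // t lt_ty; rewrite -{1}def_y nth_drop nth_take //; lia.
apply/eqP/(@eq_from_nth _ x0) => [|t]; rewrite size_drop size_takel // subKn //.
by move=> lt_ty; rewrite nth_drop nth_take ?eq_yw //; lia.
Qed.

Lemma infix_suffix_take y w : infix y w -> exists2 e, e <= size w & suffix y (take e w).
Proof.
case/infixP=> s [s' ->]; exists (size s + size y); first by rewrite !size_cat addnA leq_addr.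
by rewrite catA take_size_cat ?size_cat // suffix_suffix.
Qed.

Lemma suffix_take_infix y w e : suffix y (take e w) -> infix y w.
Proof. by move/suffix_infix_trans; apply; apply: infix_take. Qed.

Lemma suffix_rcons_take s w a j : j < size w ->
  suffix (rcons s a) (take j.+1 w) = (a == nth x0 w j) && suffix s (take j w).
Proof. by move=> lt_jw; rewrite (take_nth x0 lt_jw) suffix_rcons. Qed.

Lemma suffix_nseq_takeP m c w e : e <= size w ->
  suffix (nseq m c) (take e w) <->
  m <= e /\ forall q, e - m <= q < e -> nth x0 w q = c.
Proof.
move=> le_ew; rewrite suffix_takeP // size_nseq.
split=> -[le_me eq_c]; split=> //.
  move=> q /andP[lo hi]; have := eq_c (q - (e - m)) ltac:(lia).
  by rewrite nth_nseq ifT; [move=> ->; congr nth|]; lia.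
by move=> t lt_tm; rewrite nth_nseq lt_tm eq_c //; lia.
Qed.

Lemma rcons_nseq n c : rcons (nseq n c) c = nseq n.+1 c.
Proof. by elim: n => //= n ->. Qed.

Lemma constant_nth s : (forall t, t.+1 < size s -> nth x0 s t.+1 = nth x0 s t) -> constant s.
Proof.
move=> eq_next; apply/(constantP x0); exists (nth x0 s 0).
apply/(@eq_from_nth _ x0) => [|t lt_ts]; first by rewrite size_nseq.
rewrite nth_nseq lt_ts.
by elim: t lt_ts => // t IHt lt_ts; rewrite eq_next // IHt // ltnW.
Qed.

Lemma right_extensions_of_branch w x a b : a != b ->
  infix (rcons x a) w -> infix (rcons x b) w ->
  right_extension w (rcons x a) /\ right_extension w (rcons x b).
Proof.
move=> neq_ab occ_a occ_b; have x_rm : right_maximal w x by exists a, b.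
by split; [exists x, a | exists x, b].
Qed.

Definition run_end w : pred nat := fun p => nth x0 w p != nth x0 w p.+1.

(* An occurrence of two distinct adjacent letters straddles a run end, which
   the hypothesis pins down; so the occurrences of xa and xb would coincide. *)
Lemma right_maximal_constant w x :
  {in run_end w &, injective (nth x0 w)} -> right_maximal w x -> constant x.
Proof.
move=> end_inj [a [b [neq_ab [occ_a occ_b]]]]; apply: constant_nth => t lt_tx.
apply/eqP; apply: contraNT neq_ab => neq_t.
have [ea le_ea /(suffix_takeP _ le_ea) [sz_a eq_a]] := infix_suffix_take occ_a.
have [eb le_eb /(suffix_takeP _ le_eb) [sz_b eq_b]] := infix_suffix_take occ_b.
rewrite size_rcons in sz_a eq_a; rewrite size_rcons in sz_b eq_b.
have nth_xa u : u < size x -> nth x0 x u = nth x0 w (ea - (size x).+1 + u).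
  by move=> lt_ux; rewrite -eq_a ?nth_rcons ?lt_ux // ltnW.
have nth_xb u : u < size x -> nth x0 x u = nth x0 w (eb - (size x).+1 + u).
  by move=> lt_ux; rewrite -eq_b ?nth_rcons ?lt_ux // ltnW.
have end_a : run_end w (ea - (size x).+1 + t).
  by rewrite /run_end -addnS -!nth_xa 1?eq_sym // ltnW.
have end_b : run_end w (eb - (size x).+1 + t).
  by rewrite /run_end -addnS -!nth_xb 1?eq_sym // ltnW.
have /(end_inj _ _ end_a end_b) eq_pos :
    nth x0 w (ea - (size x).+1 + t) = nth x0 w (eb - (size x).+1 + t).
  by rewrite -nth_xa -?nth_xb // ltnW.
have := eq_a (size x) (ltnSn _); have := eq_b (size x) (ltnSn _).
rewrite !nth_rcons ltnn eqxx => ->  ->; apply/eqP; congr nth; lia.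
Qed.

End Occurrences.

Lemma exists_step_between (f : nat -> nat) n p :
  f n <= p < f 0 -> exists2 i, i < n & f i.+1 <= p < f i.
Proof.
elim: n => [|n IHn] /andP[lo hi]; first by rewrite ltnNge lo in hi.
have [le_fn | lt_fn] := leqP (f n) p; last by exists n => //; rewrite lo.
by have [|i lt_in] := IHn; [rewrite le_fn | exists i => //; apply: ltnW].
Qed.

(* Block s_i of K occupies the positions [block_end i.+1, block_end i). *)
Definition block_end (sigma : nat) (k : nat -> nat) (i : nat) : nat :=
  \sum_(i <= j < sigma) k j.

Section BlockEnds.
Variables (sigma : nat) (k : nat -> nat).
Local Notation e_ := (block_end sigma k).

Lemma block_end_geq i : sigma <= i -> e_ i = 0.
Proof. by move=> le_si; rewrite /block_end big_geq. Qed.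

Lemma block_end_ltn i : i < sigma -> e_ i = k i + e_ i.+1.
Proof. by move=> lt_is; rewrite /block_end big_ltn. Qed.

Lemma block_end_nonincr : {homo e_ : i j /~ i <= j}.
Proof.
move=> i j; apply: (@homo_leq _ e_ (fun a b => b <= a)) => // [y x z le_yx le_zy | {}i].
  exact: leq_trans le_zy le_yx.
have [lt_is | le_si] := ltnP i sigma; first by rewrite (block_end_ltn lt_is) leq_addl.
by rewrite !block_end_geq // ltnW.
Qed.

Lemma exists_block p : p < e_ 0 -> exists2 i, i < sigma & e_ i.+1 <= p < e_ i.
Proof. by move=> lt_p0; apply: exists_step_between; rewrite block_end_geq. Qed.

End BlockEnds.

Lemma block_end_recr sigma k i :
  i <= sigma -> block_end sigma.+1 k i = block_end sigma k i + k sigma.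
Proof. by move=> le_is; rewrite /block_end big_nat_recr. Qed.

Lemma Kword_recr sigma k : Kword sigma.+1 k = nseq (k sigma) (sym sigma) ++ Kword sigma k.
Proof. by rewrite /Kword -addn1 iotaD rev_cat. Qed.

Lemma size_Kword sigma k : size (Kword sigma k) = block_end sigma k 0.
Proof.
elim: sigma => [|sigma IHsigma]; first by rewrite block_end_geq.
by rewrite Kword_recr size_cat size_nseq IHsigma block_end_recr // addnC.
Qed.

Lemma nth_Kword_block sigma k i p : i < sigma ->
  block_end sigma k i.+1 <= p < block_end sigma k i -> nth 0 (Kword sigma k) p = sym i.
Proof.
elim: sigma p => // sigma IHsigma p lt_is range_p.
rewrite Kword_recr nth_cat size_nseq.
have [eq_is | ne_is] := eqVneq i sigma.
  move: range_p; rewrite eq_is block_end_geq // block_end_ltn // block_end_geq // addn0.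
  by case/andP=> _ lt_pk; rewrite lt_pk nth_nseq lt_pk.
have {ne_is}lt_is' : i < sigma by rewrite ltn_neqAle ne_is -ltnS.
move: range_p; rewrite !block_end_recr // => range_p.
have le_kp : k sigma <= p by lia.
by rewrite ltnNge le_kp /= IHsigma //; lia.
Qed.

Section Kdollar.
Variables (sigma : nat) (k : nat -> nat).
Local Notation K := (Kdollar sigma k).
Local Notation e_ := (block_end sigma k).

Lemma size_Kdollar : size K = (e_ 0).+1.
Proof. by rewrite size_rcons size_Kword. Qed.

Lemma nth_Kdollar_end : nth 0 K (e_ 0) = endmarker.
Proof. by rewrite nth_rcons size_Kword ltnn eqxx. Qed.

Lemma nth_Kdollar_block i p : i < sigma -> e_ i.+1 <= p < e_ i -> nth 0 K p = sym i.
Proof.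
move=> lt_is range_p; have lt_p0 : p < e_ 0.
  by case/andP: range_p => _ /leq_trans; apply; apply: block_end_nonincr.
by rewrite nth_rcons size_Kword lt_p0 (nth_Kword_block lt_is range_p).
Qed.

Lemma nth_Kdollar_sym i p : nth 0 K p = sym i -> i < sigma /\ e_ i.+1 <= p < e_ i.
Proof.
move=> eq_pi; have [lt_p0 | le_0p] := ltnP p (e_ 0).
  have [j lt_js range_p] := exists_block lt_p0.
  by move: eq_pi; rewrite (nth_Kdollar_block lt_js range_p) => -[<-].
move: eq_pi; rewrite leq_eqVlt in le_0p; case/orP: le_0p => [/eqP <- | lt_0p].
  by rewrite nth_Kdollar_end.
by rewrite nth_default // size_Kdollar.
Qed.

Lemma nth_Kdollar_endmarker p : p < size K -> nth 0 K p = endmarker -> p = e_ 0.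
Proof.
rewrite size_Kdollar ltnS leq_eqVlt => /orP[/eqP // | /exists_block[i lt_is range_p]].
by rewrite (nth_Kdollar_block lt_is range_p).
Qed.

Lemma run_end_Kdollar p :
  run_end 0 K p -> exists2 i, i < sigma & nth 0 K p = sym i /\ p.+1 = e_ i.
Proof.
rewrite /run_end => end_p; have [lt_p0 | le_0p] := ltnP p (e_ 0); last first.
  move: end_p; rewrite (nth_default _ (_ : size K <= p.+1)) ?size_Kdollar //.
  move: le_0p; rewrite leq_eqVlt => /orP[/eqP <- | lt_0p].
    by rewrite nth_Kdollar_end.
  by rewrite nth_default ?size_Kdollar.
have [i lt_is range_p] := exists_block lt_p0; exists i => //.
rewrite (nth_Kdollar_block lt_is range_p) in end_p *; split=> //.
apply/eqP; rewrite eqn_leq (andP range_p).2 /= leqNgt; apply: contra end_p => lt_pi.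
by rewrite (@nth_Kdollar_block i) //; lia.
Qed.

Lemma run_end_Kdollar_inj : {in run_end 0 K &, injective (nth 0 K)}.
Proof.
move=> p q /run_end_Kdollar[i _ [-> end_p]] /run_end_Kdollar[j _ [-> end_q]] [eq_ij].
by apply/succn_inj; rewrite end_p end_q eq_ij.
Qed.

Lemma suffix_nseq_KdollarP m i e : 0 < m -> e <= size K ->
  suffix (nseq m (sym i)) (take e K) <-> i < sigma /\ e_ i.+1 + m <= e <= e_ i.
Proof.
move=> m_gt0 le_eK; rewrite (suffix_nseq_takeP 0 _ _ le_eK); split.
  move=> [le_me sym_in]; have first_i := sym_in (e - m); have last_i := sym_in e.-1.
  have [lt_is /andP[lo _]] := nth_Kdollar_sym (first_i ltac:(lia)).
  have [_ /andP[_ hi]] := nth_Kdollar_sym (last_i ltac:(lia)).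
  by split=> //; lia.
move=> [lt_is range_e]; split; first lia.
by move=> q range_q; apply: nth_Kdollar_block => //; lia.
Qed.

Lemma block_end_sub_lt i (b : bool) : e_ i - b < size K.
Proof. by rewrite size_Kdollar ltnS (leq_trans (leq_subr _ _)) ?block_end_nonincr. Qed.

(* [Kpos (i, true)] is the last position of block s_i and [Kpos (i, false)]
   the position just after it, i.e. the first letter of the next block, or $. *)
Definition Kpos (ib : 'I_sigma * bool) : 'I_(size K) :=
  Ordinal (block_end_sub_lt ib.1 ib.2).

Definition Kpositions : {set 'I_(size K)} := Kpos @: setT.

Lemma Kpositions_block_end i (b : bool) :
  i < sigma -> exists2 j, j \in Kpositions & val j = e_ i - b.
Proof. by move=> lt_is; exists (Kpos (Ordinal lt_is, b)); rewrite ?imset_f ?inE. Qed.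

Hypothesis k_gt1 : forall i, i < sigma -> 1 < k i.

Lemma block_end_gap i j : i < j -> i < sigma -> e_ j + 2 <= e_ i.
Proof.
move=> lt_ij lt_is; rewrite (block_end_ltn k lt_is) addnC.
by apply: leq_add; [apply: k_gt1 | apply: block_end_nonincr].
Qed.

Lemma block_end_sub_inj i j (b c : bool) :
  i < sigma -> j < sigma -> e_ i - b = e_ j - c -> i = j /\ b = c.
Proof.
move=> lt_is lt_js eq_pos; have [lt_ij | lt_ji | eq_ij] := ltngtP i j.
- by have := block_end_gap lt_ij lt_is; case: b c eq_pos => [] []; lia.
- by have := block_end_gap lt_ji lt_js; case: b c eq_pos => [] []; lia.
- move: eq_pos; rewrite eq_ij; have := block_end_gap (ltnSn j) lt_js.
  by case: b c => [] []; lia.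
Qed.

Lemma Kpos_inj : injective Kpos.
Proof.
move=> [i b] [j c] /(congr1 val) eq_pos.
by have [/val_inj -> ->] := @block_end_sub_inj i j b c (ltn_ord i) (ltn_ord j) eq_pos.
Qed.

Lemma card_Kpositions : #|Kpositions| = 2 * sigma.
Proof.
rewrite card_imset; last exact: Kpos_inj.
by rewrite cardsT card_prod card_ord card_bool mulnC.
Qed.

Lemma nth_Kdollar_after_block i : nth 0 K (e_ i) != sym i.
Proof. by apply/eqP => /nth_Kdollar_sym[_ /andP[_]]; rewrite ltnn. Qed.

Lemma right_extensions_block i : i < sigma ->
  right_extension K (rcons (nseq (k i).-1 (sym i)) (sym i)) /\
  right_extension K (rcons (nseq (k i).-1 (sym i)) (nth 0 K (e_ i))).
Proof.
move=> lt_is; have k_i := k_gt1 lt_is; have e_i := block_end_ltn k lt_is.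
have le_iK : e_ i <= size K.
  by rewrite size_Kdollar ltnW // ltnS block_end_nonincr.
apply: right_extensions_of_branch; first by rewrite eq_sym nth_Kdollar_after_block.
  apply: (@suffix_take_infix _ _ _ (e_ i)).
  by rewrite rcons_nseq prednK ?(suffix_nseq_KdollarP _ _ le_iK); lia.
apply: (@suffix_take_infix _ _ _ (e_ i).+1).
rewrite (suffix_rcons_take 0) ?eqxx ?size_Kdollar ?ltnS ?block_end_nonincr //=.
by apply/(suffix_nseq_KdollarP _ _ le_iK); lia.
Qed.

Lemma suffix_block_end i j : i < sigma -> j < size K ->
  suffix (nseq (k i) (sym i)) (take j.+1 K) -> j.+1 = e_ i.
Proof.
move=> lt_is lt_jK /(suffix_nseq_KdollarP _ _ lt_jK) [|_].
  exact: ltnW (k_gt1 lt_is).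
by rewrite (block_end_ltn k lt_is); lia.
Qed.

Lemma suffix_block_exit i j : i < sigma -> j < size K ->
  suffix (rcons (nseq (k i).-1 (sym i)) (nth 0 K (e_ i))) (take j.+1 K) -> j = e_ i.
Proof.
move=> lt_is lt_jK; have k_i := k_gt1 lt_is.
rewrite (suffix_rcons_take 0) // => /andP[/eqP after_j].
move/(suffix_nseq_KdollarP _ _ (ltnW lt_jK)) => [|_ range_j]; first lia.
apply/eqP; rewrite eqn_leq (andP range_j).2 leqNgt; apply/negP => lt_ji.
move: (nth_Kdollar_after_block i); rewrite after_j (@nth_Kdollar_block i) ?eqxx //.
by rewrite (block_end_ltn k lt_is) in range_j lt_ji *; lia.
Qed.

Lemma Kpositions_sub_suffixient S : suffixient S -> Kpositions \subset S.
Proof.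
move=> S_suff; apply/subsetP => _ /imsetP[[i [|]] _ ->].
- have [|j jS] := S_suff (rcons (nseq (k i).-1 (sym i)) (sym i)).
    exact: (right_extensions_block (ltn_ord i)).1.
  rewrite rcons_nseq prednK ?(ltnW (k_gt1 (ltn_ord i))) //.
  move/(suffix_block_end (ltn_ord i) (ltn_ord j)) => end_j.
  by congr (_ \in S): jS; apply/val_inj; rewrite /= -end_j subn1.
- have [|j jS /(suffix_block_exit (ltn_ord i) (ltn_ord j)) end_j] :=
    S_suff (rcons (nseq (k i).-1 (sym i)) (nth 0 K (e_ i))).
    exact: (right_extensions_block (ltn_ord i)).2.
  by congr (_ \in S): jS; apply/val_inj; rewrite /= -end_j subn0.
Qed.

Hypothesis sigma_gt0 : 0 < sigma.

Lemma suffix_run_Kdollar m a e : 0 < m -> e <= size K ->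
  suffix (nseq m a) (take e K) ->
  exists2 j, j \in Kpositions & suffix (nseq m a) (take j.+1 K).
Proof.
move=> m_gt0 le_eK; case: a => [|i] suf.
  have [le_me endmarker_run] := (suffix_nseq_takeP 0 _ _ le_eK).1 suf.
  have end_e : e.-1 = e_ 0.
    by apply: nth_Kdollar_endmarker; [lia | apply: endmarker_run; lia].
  have [j jP val_j] := Kpositions_block_end false sigma_gt0.
  by exists j => //; rewrite val_j subn0 -end_e prednK //; lia.
have [lt_is range_e] := (suffix_nseq_KdollarP _ m_gt0 le_eK).1 suf.
have [j jP val_j] := Kpositions_block_end true lt_is.
exists j => //; apply/(suffix_nseq_KdollarP _ m_gt0 (ltn_ord j)).
by rewrite val_j; split=> //; lia.
Qed.

Lemma suffix_run_exit_Kdollar n c a e : 0 < n -> c != a -> e <= size K ->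
  suffix (rcons (nseq n c) a) (take e K) ->
  exists2 j, j \in Kpositions & suffix (rcons (nseq n c) a) (take j.+1 K).
Proof.
move=> n_gt0 neq_ca le_eK suf; have [sz occ] := (suffix_takeP 0 _ le_eK).1 suf.
rewrite size_rcons size_nseq in sz occ.
have c_at : nth 0 K e.-2 = c.
  have lt_n : n.-1 < n by lia.
  have := occ n.-1 (ltnW lt_n); rewrite nth_rcons size_nseq lt_n nth_nseq lt_n => ->.
  by congr nth; lia.
have a_at : nth 0 K e.-1 = a.
  by have := occ n (ltnSn n); rewrite nth_rcons size_nseq ltnn eqxx => ->; congr nth; lia.
have [|i lt_is [_ end_i]] := @run_end_Kdollar e.-2.
  by rewrite /run_end c_at (_ : e.-2.+1 = e.-1) ?a_at //; lia.
have [j jP val_j] := Kpositions_block_end false lt_is.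
by exists j => //; rewrite (_ : j.+1 = e) //; rewrite val_j subn0 -end_i; lia.
Qed.

Lemma right_extension_Kdollar y : right_extension K y ->
  exists2 j, j \in Kpositions & suffix y (take j.+1 K).
Proof.
move=> [x [a [-> [x_rm occ]]]].
have /(constantP 0) [c def_x] := right_maximal_constant run_end_Kdollar_inj x_rm.
have [e le_eK suf] := infix_suffix_take occ; rewrite {}def_x in suf *.
have [eq_ca | neq_ca] := eqVneq c a.
  rewrite -eq_ca rcons_nseq in suf *.
  exact: suffix_run_Kdollar (ltn0Sn _) le_eK suf.
have [x_nil | x_gt0] := posnP (size x).
  by rewrite x_nil in suf *; apply: (@suffix_run_Kdollar 1 a e).
exact: suffix_run_exit_Kdollar x_gt0 neq_ca le_eK suf.
Qed.

Lemma suffixient_KdollarE S : suffixient S <-> Kpositions \subset S.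
Proof.
split; first exact: Kpositions_sub_suffixient.
move=> sub_S y /right_extension_Kdollar[j jP suf].
by exists j => //; apply: (subsetP sub_S).
Qed.

End Kdollar.

Theorem lemma2 (sigma : nat) (k : nat -> nat) :
  1 <= sigma ->
  (forall i, i < sigma -> 1 < k i) ->
  (exists S : {set 'I_(size (Kdollar sigma k))},
      suffixient S /\ #|S| = 2 * sigma) /\
  (forall S : {set 'I_(size (Kdollar sigma k))},
      suffixient S -> 2 * sigma <= #|S|).
Proof.
move=> sigma_gt0 k_gt1; split.
  exists (Kpositions sigma k); rewrite card_Kpositions //.
  by split=> //; apply/suffixient_KdollarE.
move=> S /(suffixient_KdollarE k_gt1 sigma_gt0) sub_S.
by rewrite -(card_Kpositions k_gt1); apply: subset_leq_card.
Qed.
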